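(* Let $\mathcal{S}$ be the set of order types of linear orders $L$ such that $M\cdot_\omega L\cong M$ for every linear order $M$. Then $\mathcal{S}$ is closed under $\cdot_\omega$ and $\langle\mathcal{S},\cdot_\omega\rangle$ is a left-regular band: $\cdot_\omega$ is associative on $\mathcal{S}$, $L\cdot_\omega L\cong L$ for all $L\in\mathcal{S}$, and $L_1\cdot_\omega L_2\cdot_\omega L_1\cong L_1\cdot_\omega L_2$ for all $L_1,L_2\in\mathcal{S}$.
   Context: The countable condensation $\sim_\omega$ on a linear order $L$: $x\sim_\omega y$ iff the closed interval between $x$ and $y$ is countable; $L/\!\sim_\omega$ is the linear order of its classes. $ML$ denotes the lexicographic product (each element of $M$ replaced by a copy of $L$). For linear orders $M,L$, $M\cdot_\omega L$ is the order type of $ML/\!\sim_\omega$; this operation is considered on order types. A left-regular band is a semigroup in which every element is idempotent and $xyx=xy$ for all $x,y$. *)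

Record Ord := {
  carrier :> Type;
  lt : carrier -> carrier -> Prop
}.
Arguments lt {o} _ _.

Definition is_linear (L : Ord) : Prop :=
  (forall x : L, ~ lt x x) /\
  (forall x y z : L, lt x y -> lt y z -> lt x z) /\
  (forall x y : L, lt x y \/ x = y \/ lt y x).

Definition le {L : Ord} (x y : L) : Prop := lt x y \/ x = y.

Definition iso (L1 L2 : Ord) : Prop :=
  exists (f : L1 -> L2) (g : L2 -> L1),
    (forall x, g (f x) = x) /\ (forall y, f (g y) = y) /\
    (forall x y, lt x y <-> lt (f x) (f y)).

Definition countable_set {T : Type} (P : T -> Prop) : Prop :=
  exists f : {x : T | P x} -> nat, forall a b, f a = f b -> a = b.

Definition closed_between {L : Ord} (x y z : L) : Prop :=
  (le x z /\ le z y) \/ (le y z /\ le z x).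

Definition cond_omega {L : Ord} (x y : L) : Prop :=
  countable_set (closed_between x y).

Definition is_class (L : Ord) (P : L -> Prop) : Prop :=
  exists x : L, forall y, P y <-> cond_omega x y.

(** L / ~_w : the classes, ordered by  A < B  iff every element of A is below
    every element of B (classes are convex intervals). *)
Definition condense (L : Ord) : Ord := {|
  carrier := {P : L -> Prop | is_class L P};
  lt := fun A B => forall a b, proj1_sig A a -> proj1_sig B b -> lt a b
|}.

(** Lexicographic product ML: each element of M replaced by a copy of L. *)
Definition lexprod (M L : Ord) : Ord := {|
  carrier := (carrier M * carrier L)%type;
  lt := fun p q => lt (fst p) (fst q) \/ (fst p = fst q /\ lt (snd p) (snd q))
|}.

Definition cdot_omega (M L : Ord) : Ord := condense (lexprod M L).

Definition in_S (L : Ord) : Prop :=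
  is_linear L /\ forall M : Ord, is_linear M -> iso (cdot_omega M L) M.

(* Every L in S acts as a right identity: M .w L ~= M for each linear M. Since
   .w respects isomorphism in its right argument, each of the four claims
   collapses: L1 .w L2 ~= L1 gives closure (M .w (L1 .w L2) ~= M .w L1 ~= M),
   associativity (both sides are ~= L1 .w L2), idempotence, and left-regularity
   ((L1 .w L2) .w L1 ~= L1 .w L2 because L1 is a right identity). *)

From Stdlib Require Import Setoid FunctionalExtensionality ProofIrrelevance.

Lemma iso_sym (A B : Ord) : iso A B -> iso B A.
Proof.
  intros [f [g [gK [fK Hf]]]]. exists g, f. split; [exact fK | split; [exact gK |]].
  intros x y. rewrite Hf, !fK. tauto.
Qed.

Lemma iso_trans (A B C : Ord) : iso A B -> iso B C -> iso A C.
Proof.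
  intros [f [g [gK [fK Hf]]]] [f' [g' [gK' [fK' Hf']]]].
  exists (fun x => f' (f x)), (fun z => g (g' z)). split; [| split].
  - intros x. rewrite gK'. apply gK.
  - intros z. rewrite fK. apply fK'.
  - intros x y. rewrite Hf, Hf'. tauto.
Qed.

Lemma countable_set_inj {T U : Type} (P : T -> Prop) (Q : U -> Prop) (g : T -> U) :
  (forall x y, g x = g y -> x = y) -> (forall x, P x -> Q (g x)) ->
  countable_set Q -> countable_set P.
Proof.
  intros g_inj gPQ [c c_inj].
  exists (fun w => c (exist _ (g (proj1_sig w)) (gPQ _ (proj2_sig w)))).
  intros [a ha] [b hb] h. apply c_inj in h. injection h as h.
  apply g_inj in h. subst b. f_equal. apply proof_irrelevance.
Qed.

Section OrderIsomorphism.
Variables (A B : Ord) (f : A -> B) (g : B -> A).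
Hypotheses (gK : forall x, g (f x) = x) (fK : forall y, f (g y) = y)
  (f_lt : forall x y, lt x y <-> lt (f x) (f y)).

Lemma g_lt (u v : B) : lt u v <-> lt (g u) (g v).
Proof. rewrite f_lt, !fK. tauto. Qed.

Lemma f_inj (x y : A) : f x = f y -> x = y.
Proof. intros h. rewrite <- (gK x), h. apply gK. Qed.

Lemma g_inj (u v : B) : g u = g v -> u = v.
Proof. intros h. rewrite <- (fK u), h. apply fK. Qed.

Lemma f_le (x y : A) : le x y <-> le (f x) (f y).
Proof.
  unfold le. rewrite f_lt. split; intros [h | h]; auto.
  - right; congruence.
  - right. apply f_inj, h.
Qed.

Lemma f_closed_between (x y z : A) :
  closed_between x y z <-> closed_between (f x) (f y) (f z).
Proof. unfold closed_between. rewrite !f_le. tauto. Qed.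

Lemma f_cond_omega (x y : A) : cond_omega x y <-> cond_omega (f x) (f y).
Proof.
  split; intros h.
  - apply (countable_set_inj (closed_between (f x) (f y)) (closed_between x y) g g_inj); [| exact h].
    intros z hz. apply f_closed_between. rewrite fK. exact hz.
  - apply (countable_set_inj (closed_between x y) (closed_between (f x) (f y)) f f_inj); [| exact h].
    intros z hz. apply f_closed_between, hz.
Qed.

Lemma f_is_class (P : A -> Prop) : is_class A P -> is_class B (fun y => P (g y)).
Proof.
  intros [x Hx]. exists (f x). intros y. rewrite Hx, f_cond_omega, fK. tauto.
Qed.

End OrderIsomorphism.

Lemma iso_linear (A B : Ord) : iso A B -> is_linear A -> is_linear B.
Proof.
  intros [f [g [gK [fK f_lt]]]] [irr [trans total]].
  pose proof (g_lt A B f g fK f_lt) as glt.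
  split; [| split].
  - intros x Hx. apply (irr (g x)), glt, Hx.
  - intros x y z Hxy Hyz. apply glt. apply glt in Hxy, Hyz. eauto.
  - intros x y. destruct (total (g x) (g y)) as [h | [h | h]].
    + left. apply glt, h.
    + right; left. apply (g_inj A B f g fK), h.
    + right; right. apply glt, h.
Qed.

Lemma iso_condense (A B : Ord) : iso A B -> iso (condense A) (condense B).
Proof.
  intros [f [g [gK [fK f_lt]]]].
  pose proof (g_lt A B f g fK f_lt) as glt.
  exists (fun P => exist _ _ (f_is_class A B f g gK fK f_lt _ (proj2_sig P))).
  exists (fun Q => exist _ _ (f_is_class B A g f fK gK glt _ (proj2_sig Q))).
  split; [| split].
  - intros [P hP]. apply eq_sig_hprop; [intros; apply proof_irrelevance |].
    apply functional_extensionality. intros x. simpl. rewrite gK. reflexivity.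
  - intros [Q hQ]. apply eq_sig_hprop; [intros; apply proof_irrelevance |].
    apply functional_extensionality. intros y. simpl. rewrite fK. reflexivity.
  - intros [P hP] [Q hQ]; simpl. split.
    + intros h u v hu hv. apply glt, h; assumption.
    + intros h a b ha hb. apply f_lt, h; rewrite gK; assumption.
Qed.

Lemma iso_lexprod_r (M L L' : Ord) : iso L L' -> iso (lexprod M L) (lexprod M L').
Proof.
  intros [f [g [gK [fK f_lt]]]].
  exists (fun p => (fst p, f (snd p))), (fun p => (fst p, g (snd p))).
  split; [| split].
  - intros [a b]; simpl; rewrite gK; reflexivity.
  - intros [a b]; simpl; rewrite fK; reflexivity.
  - intros [a b] [c d]; simpl. rewrite f_lt. tauto.
Qed.

Lemma iso_cdot_omega_r (M L L' : Ord) :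
  iso L L' -> iso (cdot_omega M L) (cdot_omega M L').
Proof. intros h. apply iso_condense, iso_lexprod_r, h. Qed.

Lemma in_S_cdot_omega_r (M L : Ord) :
  in_S L -> is_linear M -> iso (cdot_omega M L) M.
Proof. intros [_ SL] linM. apply SL, linM. Qed.

Lemma in_S_cdot_omega (L1 L2 : Ord) :
  in_S L1 -> in_S L2 -> in_S (cdot_omega L1 L2).
Proof.
  intros S1 S2.
  pose proof (in_S_cdot_omega_r L1 L2 S2 (proj1 S1)) as I12.
  split; [apply (iso_linear L1), (proj1 S1); apply iso_sym, I12 |].
  intros M linM. apply iso_trans with (cdot_omega M L1).
  - apply iso_cdot_omega_r, I12.
  - apply in_S_cdot_omega_r; assumption.
Qed.

Theorem theorem5p2 :
  forall L1 L2 L3 : Ord, in_S L1 -> in_S L2 -> in_S L3 ->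
    (* closure of S under .w *)
    in_S (cdot_omega L1 L2) /\
    (* associativity *)
    iso (cdot_omega (cdot_omega L1 L2) L3) (cdot_omega L1 (cdot_omega L2 L3)) /\
    (* idempotence *)
    iso (cdot_omega L1 L1) L1 /\
    (* left-regularity: L1 L2 L1 = L1 L2 *)
    iso (cdot_omega (cdot_omega L1 L2) L1) (cdot_omega L1 L2).
Proof.
  intros L1 L2 L3 S1 S2 S3.
  pose proof (in_S_cdot_omega L1 L2 S1 S2) as S12.
  split; [exact S12 | split; [| split]].
  - apply iso_trans with (cdot_omega L1 L2).
    + apply in_S_cdot_omega_r; [exact S3 | exact (proj1 S12)].
    + apply iso_cdot_omega_r, iso_sym, in_S_cdot_omega_r; [exact S3 | exact (proj1 S2)].
  - apply in_S_cdot_omega_r; [exact S1 | exact (proj1 S1)].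
  - apply in_S_cdot_omega_r; [exact S1 | exact (proj1 S12)].
Qed.
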